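(* Let $n\ge3$ and $k\ge0$ be integers. There exists a subset of $\mathrm{Inc}(A,B)$ that is independent in $G_n^k$ and not reversible if and only if $n\le 2k$.
   Context: For integers $n\ge3$, $k\ge0$, the crown $S_n^k$ is the poset with ground set $A\cup B$, $A=\{a_1,\dots,a_{n+k}\}$, $B=\{b_1,\dots,b_{n+k}\}$, indices cyclic modulo $n+k$; elements of $A$ are pairwise incomparable, as are elements of $B$, and $a_i$ is incomparable to $b_j$ when $j\in\{i,i+1,\dots,i+k\}$ (mod $n+k$), while $a_i<b_j$ otherwise. $\mathrm{Inc}(A,B)$ is the set of pairs $(a,b)\in A\times B$ with $a$ incomparable to $b$. The graph $G_n^k$ has vertex set $\mathrm{Inc}(A,B)$, with $(a,b)$ adjacent to $(x,y)$ iff $a<y$ and $x<b$ in $S_n^k$. A set $R\subseteq\mathrm{Inc}(A,B)$ is reversible if there is a linear extension $L$ of $S_n^k$ with $b<a$ in $L$ for all $(a,b)\in R$. *)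

From mathcomp Require Import all_boot.
Set Implicit Arguments. Unset Strict Implicit. Unset Printing Implicit Defensive.

(* Ground set of the crown S_n^k: A = {a_0..a_{n+k-1}} encoded as inl i,
   B = {b_0..b_{n+k-1}} encoded as inr j (0-indexed, cyclic mod n+k). *)
Definition crown_elt (n k : nat) : finType := ('I_(n + k) + 'I_(n + k))%type.

(* Strict order of S_n^k: a_i < b_j iff j is NOT in {i, i+1, ..., i+k} mod n+k;
   no other strict relations. *)
Definition crown_lt (n k : nat) (x y : crown_elt n k) : bool :=
  match x, y with
  | inl i, inr j => k < (j + (n + k) - i) %% (n + k)
  | _, _ => false
  end.

Definition crown_incomparable (n k : nat) (x y : crown_elt n k) : bool :=
  [&& x != y, ~~ crown_lt x y & ~~ crown_lt y x].

Definition IncAB (n k : nat) : {set 'I_(n + k) * 'I_(n + k)} :=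
  [set p | crown_incomparable (n:=n) (k:=k) (inl p.1) (inr p.2)].

Definition G_adj (n k : nat) (p q : 'I_(n + k) * 'I_(n + k)) : bool :=
  crown_lt (n:=n) (k:=k) (inl p.1) (inr q.2) &&
  crown_lt (n:=n) (k:=k) (inl q.1) (inr p.2).

Definition G_independent (n k : nat) (R : {set 'I_(n + k) * 'I_(n + k)}) : Prop :=
  forall p q, p \in R -> q \in R -> ~~ G_adj p q.

Definition linear_extension (n k : nat) (L : rel (crown_elt n k)) : Prop :=
  [/\ irreflexive L, transitive L,
      (forall x y, x != y -> L x y || L y x) &
      (forall x y, crown_lt x y -> L x y)].

Definition reversible (n k : nat) (R : {set 'I_(n + k) * 'I_(n + k)}) : Prop :=
  exists L : rel (crown_elt n k), linear_extension L /\
    forall p, p \in R -> L (inr p.2) (inl p.1).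

From mathcomp Require Import all_boot zify.

Set Implicit Arguments.
Unset Strict Implicit.
Unset Printing Implicit Defensive.

(* Trotter's criterion: a set R of incomparable pairs is reversible iff it
   has no alternating cycle, i.e. pairs p_1, ..., p_m of R with a_(p_i) <
   b_(p_(i+1)) cyclically.  Such a cycle forces b_(p_1) < ... < b_(p_1) in any
   reversing extension; without one, ranking every element by the number of
   pairs of R forced below it yields a reversing extension.  Independence in
   G_n^k rules out alternating cycles of length 1 and 2.  When n > 2k, an
   alternating path of length 3 whose two inner pairs lie in an independent
   set can always be shortened, so every alternating cycle would collapse to
   one of length at most 2.  When n <= 2k, the pairs (a_0, b_0),
   (a_n, b_(k + n/2)) and (a_(n/2), b_(n/2)) are pairwise non-adjacent and
   form an alternating 3-cycle. *)

Definition cdist (N i j : nat) : nat := (j + N - i) %% N.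

Section CyclicDistance.

Variable N : nat.

Lemma cdistE i j : i < N -> j < N ->
  cdist N i j = if i <= j then j - i else j + N - i.
Proof.
move=> hi hj; rewrite /cdist; case: leqP => hij.
- by rewrite (_ : j + N - i = j - i + N) ?modnDr ?modn_small //; lia.
- by rewrite modn_small //; lia.
Qed.

Lemma cdist_lt i j : 0 < N -> cdist N i j < N.
Proof. exact: ltn_pmod. Qed.

Lemma cdistnn i : cdist N i i = 0.
Proof. by rewrite /cdist addKn modnn. Qed.

Lemma cdist0n j : j < N -> cdist N 0 j = j.
Proof. by move=> hj; rewrite /cdist subn0 modnDr modn_small. Qed.

Lemma cdist_rot c i j : c < N -> i < N -> j < N ->
  cdist N (cdist N c i) (cdist N c j) = cdist N i j.
Proof.
move=> hc hi hj; have hN : 0 < N by lia.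
rewrite [LHS]cdistE ?cdist_lt // !cdistE //.
by case: (leqP c i) => ?; case: (leqP c j) => ?; case: (leqP i j) => ?;
  case: ifP; lia.
Qed.

End CyclicDistance.

Definition rank_lex (T : finType) (f : T -> nat) : rel T :=
  fun x y => (f x < f y) || ((f x == f y) && (enum_rank x < enum_rank y)).

Section Crown.

Variables n k : nat.

Local Notation N := (n + k).
Local Notation pair := ('I_N * 'I_N)%type.

Implicit Types (p q s m : pair) (R : {set pair}).

Definition alt_edge p q : bool := crown_lt (inl p.1) (inr q.2).

Lemma alt_edgeE p q : alt_edge p q = (k < cdist N p.1 q.2).
Proof. by []. Qed.

Lemma G_adjE p q : G_adj p q = alt_edge p q && alt_edge q p.
Proof. by []. Qed.

Lemma mem_IncAB p : (p \in IncAB n k) = ~~ alt_edge p p.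
Proof. by rewrite inE /crown_incomparable /= andbT. Qed.

Lemma linear_extension_rank_lex (f : crown_elt n k -> nat) :
  (forall x y, crown_lt x y -> f x < f y) -> linear_extension (rank_lex f).
Proof.
move=> f_mono; split; rewrite /rank_lex.
- by move=> x; rewrite ltnn eqxx ltnn.
- by move=> y x z; lia.
- move=> x y /eqP neq_xy.
  have /eqP : (enum_rank x : nat) != enum_rank y.
    by apply/eqP => /val_inj/enum_rank_inj.
  by lia.
- by move=> x y /f_mono ->.
Qed.

Definition alt_rel R : rel pair :=
  fun p q => [&& p \in R, q \in R & alt_edge p q].

Definition alt_acyclic R : Prop :=
  forall p q, alt_rel R p q -> ~~ connect (alt_rel R) q p.

Lemma reversible_alt_acyclic R : reversible R -> alt_acyclic R.
Proof.
case=> L [[irrL trL _ extL] revL] p q pq; apply/negP => /connectP [s qs def_p].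
pose Lb : rel pair := fun u v => L (inr u.2) (inr v.2).
have trLb : transitive Lb by move=> v u w; apply: trL.
have altLb u v : alt_rel R u v -> Lb u v.
  by case/and3P => uR _ uv; apply: trL (revL u uR) (extL _ _ uv).
have : path Lb p (q :: s) by apply: (sub_path altLb); rewrite /= pq.
rewrite path_sortedE // => /andP [/allP/(_ p) + _].
by rewrite {1}def_p mem_last /Lb irrL => /(_ isT).
Qed.

Definition forced_below R (z : crown_elt n k) : {set pair} :=
  [set s | [exists p in R,
     ((inl p.1 == z) || crown_lt (inl p.1) z) && connect (alt_rel R) s p]].

(* Even ranks on A and odd ranks on B turn both a_x < b_y and the reversal
   b_y < a_x of (x, y) \in R into strict inequalities between ranks. *)
Definition forced_rank R (z : crown_elt n k) : nat :=
  2 * #|forced_below R z| + (if z is inr _ then 1 else 0).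

Lemma forced_rank_lt R x y : crown_lt (inl x) (inr y) ->
  forced_rank R (inl x) < forced_rank R (inr y).
Proof.
move=> xy; have : forced_below R (inl x) \subset forced_below R (inr y).
  apply/subsetP => s; rewrite !inE.
  case/exists_inP => p pR /andP [/orP [/eqP [px] | //] sp].
  by apply/exists_inP; exists p; rewrite // px xy orbT.
move/subset_leq_card; rewrite /forced_rank.
by set a := #|_|; set b := #|_|; lia.
Qed.

Lemma forced_rank_rev R x y : alt_acyclic R -> (x, y) \in R ->
  forced_rank R (inr y) < forced_rank R (inl x).
Proof.
move=> acyc xyR.
have : forced_below R (inr y) \proper forced_below R (inl x).
  apply/properP; split.
  - apply/subsetP => s; rewrite !inE.
    case/exists_inP => p pR /andP [/= py sp].
    apply/exists_inP; exists (x, y); rewrite //= eqxx.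
    by apply: connect_trans sp (connect1 _); rewrite /alt_rel pR xyR.
  - exists (x, y); rewrite !inE.
      by apply/exists_inP; exists (x, y); rewrite //= eqxx connect0.
    apply/exists_inP => -[p pR /andP [/= py xyp]].
    by have := acyc p (x, y); rewrite /alt_rel /= pR xyR xyp => /(_ py).
move/proper_card; rewrite /forced_rank.
by set b := #|_|; set a := #|_|; lia.
Qed.

Lemma alt_acyclic_reversible R : alt_acyclic R -> reversible R.
Proof.
move=> acyc; exists (rank_lex (forced_rank R)); split.
  by apply: linear_extension_rank_lex => -[x|x] [y|y] //= /forced_rank_lt.
by move=> [x y] xyR; apply/orP; left; apply: forced_rank_rev.
Qed.

Lemma reversibleP R : reversible R <-> alt_acyclic R.
Proof.
by split; [apply: reversible_alt_acyclic | apply: alt_acyclic_reversible].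
Qed.

(* After rotating the cycle so that a_p = a_0, this is linear arithmetic. *)
Lemma cdist_shortcut (xs xm xp ym yp yq : nat) : 2 * k < n ->
  xs < N -> xm < N -> xp < N -> ym < N -> yp < N -> yq < N ->
  cdist N xm ym <= k -> cdist N xp yp <= k -> cdist N xp ym <= k ->
  k < cdist N xs ym -> k < cdist N xm yp -> k < cdist N xp yq ->
  [|| k < cdist N xs yq, k < cdist N xs yp | k < cdist N xm yq].
Proof.
move=> hn; wlog -> : xs xm xp ym yp yq / xp = 0.
  move=> wlog0 hs hm hp hym hyp hyq *; have hN : 0 < N by lia.
  have := wlog0 (cdist N xp xs) (cdist N xp xm) (cdist N xp xp)
    (cdist N xp ym) (cdist N xp yp) (cdist N xp yq) (cdistnn _ xp).
  by rewrite !cdist_rot //; apply; rewrite ?cdist_lt.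
move=> hs hm _ hym hyp hyq; rewrite !cdist0n // !cdistE //.
by repeat case: ifP => ?; lia.
Qed.

Lemma alt_edge_shortcut s m p q : 2 * k < n ->
  ~~ alt_edge m m -> ~~ alt_edge p p -> ~~ alt_edge p m ->
  alt_edge s m -> alt_edge m p -> alt_edge p q ->
  [|| alt_edge s q, alt_edge s p | alt_edge m q].
Proof. by move=> hn; rewrite !alt_edgeE -!leqNgt; apply: cdist_shortcut. Qed.

Definition short_alt R s q : bool :=
  alt_edge s q || [exists m in R, alt_edge s m && alt_edge m q].

Lemma independent_alt_irr R p : G_independent R -> p \in R -> ~~ alt_edge p p.
Proof. by move=> indR pR; have := indR p p pR pR; rewrite G_adjE andbb. Qed.

Lemma short_alt_step R s p q : 2 * k < n -> G_independent R ->
  p \in R -> short_alt R s p -> alt_edge p q -> short_alt R s q.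
Proof.
move=> hn indR pR /orP [sp | /exists_inP [m mR /andP [sm mp]]] pq.
  by apply/orP; right; apply/exists_inP; exists p; rewrite // sp.
have pm : ~~ alt_edge p m by have := indR p m pR mR; rewrite G_adjE mp andbT.
have := alt_edge_shortcut hn (independent_alt_irr indR mR)
  (independent_alt_irr indR pR) pm sm mp pq.
case/or3P => [sq | sp' | mq]; apply/orP; [by left | right..]; apply/exists_inP.
- by exists p; rewrite // sp'.
- by exists m; rewrite // sm.
Qed.

Lemma independent_alt_acyclic R : 2 * k < n -> G_independent R -> alt_acyclic R.
Proof.
move=> hn indR p q /and3P [pR _ pq]; apply/negP => /connectP [s qs def_p].
have reach t r :
    short_alt R p r -> path (alt_rel R) r t -> short_alt R p (last r t).
  elim: t r => //= u t IHt r pr /andP [/and3P [rR _ ru] ut].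
  exact/IHt/ut/short_alt_step/ru.
have := reach s q; rewrite -def_p /short_alt pq => /(_ isT qs).
rewrite (negbTE (independent_alt_irr indR pR)) /=.
case/exists_inP => m mR /andP [pm mp].
by have := indR p m pR mR; rewrite G_adjE pm mp.
Qed.

Lemma independent_sub_IncAB R : G_independent R -> R \subset IncAB n k.
Proof.
move=> indR; apply/subsetP => p pR.
by rewrite mem_IncAB (independent_alt_irr indR).
Qed.

Lemma alt_triangle_not_reversible R p q r : p \in R -> q \in R -> r \in R ->
  alt_edge p q -> alt_edge q r -> alt_edge r p -> ~ reversible R.
Proof.
move=> pR qR rR pq qr rp /reversibleP/(_ p q).
rewrite /alt_rel pR qR pq => /(_ isT)/negP; apply.
by apply: (@connect_trans _ _ r); apply: connect1; rewrite /alt_rel ?pR ?qR ?rR.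
Qed.

Lemma exists_independent_alt_triangle : 3 <= n -> n <= 2 * k ->
  exists p q r : pair, [/\ G_independent [set p; q; r],
    alt_edge p q, alt_edge q r & alt_edge r p].
Proof.
move=> n3 nk.
have h0 : 0 < N by lia.
have hn : n < N by lia.
have hm : k + n %/ 2 < N by lia.
have hh : n %/ 2 < N by lia.
pose o0 := Ordinal h0; pose oh := Ordinal hh.
exists (o0, o0), (Ordinal hn, Ordinal hm), (oh, oh); split.
- move=> u v; rewrite !inE -!orbA G_adjE !alt_edgeE.
  by case/or3P => /eqP -> /or3P [] /eqP -> /=; rewrite !cdistE // ?leq0n;
    repeat case: ifP => ?; lia.
all: by rewrite alt_edgeE /= !cdistE // ?leq0n; repeat case: ifP => ?; lia.
Qed.

End Crown.

Theorem lemma1p4 (n k : nat) (hn : 3 <= n) :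
  (exists R : {set 'I_(n + k) * 'I_(n + k)},
      R \subset IncAB n k /\ G_independent R /\ ~ reversible R)
  <-> n <= 2 * k.
Proof.
split.
- case=> R [_ [indR not_rev]]; rewrite leqNgt; apply/negP => nk.
  exact/not_rev/reversibleP/independent_alt_acyclic.
- move=> nk.
  have [p [q [r [indR pq qr rp]]]] := exists_independent_alt_triangle hn nk.
  exists [set p; q; r]; split; first exact: independent_sub_IncAB.
  split=> //; apply: (alt_triangle_not_reversible _ _ _ pq qr rp);
    by rewrite !inE eqxx ?orbT.
Qed.
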